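(* Let $A\in\mathbb{R}^{m\times n}$, $b\in\mathbb{R}^m$. Let $H=AA^T$, or, if $A$ is (square) symmetric positive semidefinite, $H=A$. Let $\lambda_{\max}$, $\kappa^+$ and $c(H)=1/(\kappa^+\lambda_{\max})$ be as in the context. Given $w_0\in\mathbb{R}^m$, set $x_0=A^Tw_0$, $r_0=b-Ax_0$, and for $k\ge1$ (as long as $Hr_{k-1}\ne0$) set $r_k=F_1(r_{k-1})$ and $$x_k=x_{k-1}+\alpha_{1,1}(r_{k-1})\,r_{k-1}\ \text{ if } H=A,\qquad x_k=x_{k-1}+\alpha_{1,1}(r_{k-1})\,A^Tr_{k-1}\ \text{ if } H=AA^T,$$ where $\alpha_{1,1}(r)=r^THr/r^TH^2r$. Suppose $k\ge1$ and $Hr_j\neq0$ for $j=0,\dots,k-1$. Then: (I) $r_k=b-Ax_k$. (II) If $Ax=b$ is solvable, $\|r_k\|\le\left(\frac{\kappa^+-1}{\kappa^++1}\right)^k\|r_0\|$. (III) If $Ax=b$ is solvable and $\varepsilon\in(0,1)$, then $\|r_k\|\le\varepsilon$ whenever $k\ge\kappa^+\ln(\|r_0\|/\varepsilon)$. (IV) Regardless of solvability, $\|r_k\|^2\le\|r_0\|^2-c(H)\sum_{j=0}^{k-1}r_j^THr_j$. (V) Regardless of solvability, if $\varepsilon\in(0,1)$ and $r_j^THr_j>\varepsilon$ for all $j=0,\dots,k-1$, then $k\le\kappa^+\lambda_{\max}\|r_0\|^2/\varepsilon$. (VI) If $\|r_k\|\le\varepsilon$ then $\|Ax_k-b\|\le\varepsilon$;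 if $r_k^THr_k\le\varepsilon$ then $\|A^TAx_k-A^Tb\|\le\sqrt{\varepsilon}$ when $H=AA^T$, and $\|A^TAx_k-A^Tb\|\le\sqrt{\varepsilon}\,\|A\|^{1/2}$ when $H=A$.
   Context: Norms are Euclidean; $\|A\|$ is the operator 2-norm. $\lambda_{\max}$ is the largest eigenvalue of $H$ and $\kappa^+$ is the ratio of the largest eigenvalue of $H$ to its smallest positive eigenvalue. For $r$ with $Hr\ne0$, $F_1(r)=r-\frac{r^THr}{r^TH^2r}Hr$. *)

From HB Require Import structures.
From mathcomp Require Import all_boot all_order all_algebra.
From mathcomp Require Import all_classical all_reals all_analysis.
Set Implicit Arguments. Unset Strict Implicit. Unset Printing Implicit Defensive.
Import Order.TTheory GRing.Theory Num.Theory.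
Local Open Scope ring_scope.
Local Open Scope classical_set_scope.

Section Defs.
Variable R : realType.

Definition vnorm (p : nat) (v : 'cV[R]_p) : R :=
  Num.sqrt (\sum_(i < p) (v i 0) ^+ 2).

Definition opnorm (p q : nat) (M : 'M[R]_(p, q)) : R :=
  sup [set vnorm (M *m x) | x in [set x : 'cV[R]_q | vnorm x <= 1]].

Definition bilin (p : nat) (u : 'cV[R]_p) (M : 'M[R]_p) (v : 'cV[R]_p) : R :=
  (u^T *m M *m v) 0 0.

Definition sym_psd (p : nat) (M : 'M[R]_p) : Prop :=
  M^T = M /\ forall v : 'cV[R]_p, 0 <= bilin v M v.

Definition lambda_max (p : nat) (H : 'M[R]_p) : R :=
  sup [set a : R | eigenvalue H a].
Definition lambda_min_pos (p : nat) (H : 'M[R]_p) : R :=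
  inf [set a : R | eigenvalue H a /\ 0 < a].
Definition kappa_plus (p : nat) (H : 'M[R]_p) : R :=
  lambda_max H / lambda_min_pos H.
Definition cH (p : nat) (H : 'M[R]_p) : R :=
  1 / (kappa_plus H * lambda_max H).

Definition alpha11 (p : nat) (H : 'M[R]_p) (r : 'cV[R]_p) : R :=
  bilin r H r / bilin r (H *m H) r.
Definition F1 (p : nat) (H : 'M[R]_p) (r : 'cV[R]_p) : 'cV[R]_p :=
  r - alpha11 H r *: (H *m r).

End Defs.

From HB Require Import structures.
From mathcomp Require Import all_boot all_order all_algebra.
From mathcomp Require Import all_classical all_reals all_analysis.
From mathcomp Require Import complex.
From mathcomp Require Import ring lra.
Import Order.TTheory GRing.Theory Num.Theory.
Set Implicit Arguments. Unset Strict Implicit. Unset Printing Implicit Defensive.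
Local Open Scope ring_scope.

(* Everything rests on the moments  m_j(v) = v^T H^j v:
   |v|^2 = m_0, v^T H v = m_1, |Hv|^2 = m_2, and one step gives
   |F_1 v|^2 = m_0 - m_1^2 / m_2.
   1. Spectral theorem (via the complex unitary diagonalization of MathComp):
      the moments of any v are nonnegative combinations  sum_i w_i d_i^j  of
      powers of the eigenvalues d_i of H.  This yields the spectral facts
      0 < lambda_min_pos <= lambda_max and  m_2 <= lambda_max m_1.
   2. One step: the energy decrease |F_1 v|^2 <= |v|^2 - c(H) v^T H v, and, for
      v whose spectral weights avoid the kernel of H, a Kantorovich-type bound
      |F_1 v| <= (kappa-1)/(kappa+1) |v|.  Residuals A s in the range of A are
      of this kind, for H = A A^T (weights of A^T A) and for H = A psd.
   3. Iteration: for any direction map with A (dir v) = H v, the residual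
      identity (I), range invariance, geometric decay (II), telescoped energy
      bound (IV), and the scalar estimates giving (III) and (V).
   4. The normal-equation residuals (VI): |A^T r|^2 = r^T A A^T r, and for psd A
      |A r|^2 <= |A| r^T A r since every eigenvalue is at most |A|. *)

Definition moment (R : realType) n (G : 'M[R]_n) (u : 'cV[R]_n) (j : nat) : R :=
  (u^T *m G ^+ j *m u) 0 0.

(* The complexification Gc of a real symmetric G is hermitian, hence unitarily
   diagonalizable, Gc = P^* diag(D) P with a real diagonal D. *)
Section SymmetricSpectrum.
Local Open Scope sesquilinear_scope.
Variables (R : realType) (n : nat) (G : 'M[R]_n).
Hypothesis Gsym : G^T = G.

Let toC : {rmorphism R -> R[i]} := real_complex R.
Let Gc := map_mx toC G.
Let P := spectralmx Gc.
Let D := spectral_diag Gc.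

Let conj_toC (x : R) : (toC x)^* = toC x.
Proof. by apply/CrealP; rewrite /toC /= complex_real. Qed.

Let Gc_hermitian : Gc \is hermsymmx.
Proof.
apply/is_hermitianmxP; rewrite expr0 scale1r.
by apply/matrixP => i j; rewrite !mxE conj_toC -{1}Gsym mxE.
Qed.

Let PPt : P *m P^t* = 1%:M.
Proof. exact/unitarymxP/spectral_unitarymx. Qed.

Let PtP : P^t* *m P = 1%:M.
Proof. by rewrite -invmx_unitary ?spectral_unitarymx // mulVmx // spectral_unit. Qed.

Let Gc_spectral : Gc = P^t* *m diag_mx D *m P.
Proof.
have /orthomx_spectralP := hermitian_normalmx Gc_hermitian.
by rewrite invmx_unitary // spectral_unitarymx.
Qed.

Let D_real i : toC (complex.Re (D 0 i)) = D 0 i.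
Proof.
by apply/RRe_real/(mxOverP (hermitian_spectral_diag_real Gc_hermitian)).
Qed.

Let spectral_diag_eigenvalue i : eigenvalue G (complex.Re (D 0 i)).
Proof.
rewrite -(eigenvalue_map toC) -/Gc D_real; apply/eigenvalueP.
exists (row i P).
  rewrite -row_mul Gc_spectral !mulmxA PPt mul1mx mul_diag_mx.
  by apply/rowP => j; rewrite !mxE.
apply/negP => /eqP Pi0; have := congr1 (row i) PPt.
rewrite row_mul Pi0 mul0mx => /rowP /(_ i).
by rewrite !mxE eqxx /= => /eqP; rewrite eq_sym oner_eq0.
Qed.

Let Gc_powers j : map_mx toC (G ^+ j) = P^t* *m diag_mx (\row_i D 0 i ^+ j) *m P.
Proof.
elim: j => [|j IH].
  have -> : diag_mx (\row_i D 0 i ^+ 0) = 1%:M.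
    by apply/matrixP => a b; rewrite !mxE expr0.
  by rewrite expr0 map_mx1 mulmx1 PtP.
rewrite exprSr -mulmxE map_mxM IH -/Gc Gc_spectral -!mulmxA; congr (_ *m _).
rewrite (mulmxA P) PPt mul1mx mulmxA mulmx_diag.
by congr (diag_mx _ *m _); apply/rowP => a; rewrite !mxE exprSr.
Qed.

Let spectral_moments (u : 'cV[R]_n) j :
  moment G u j = \sum_i ((complex.Re ((P *m map_mx toC u) i 0)) ^+ 2 +
                         (complex.Im ((P *m map_mx toC u) i 0)) ^+ 2) *
                        complex.Re (D 0 i) ^+ j.
Proof.
apply: (fmorph_inj toC); rewrite rmorph_sum /=.
have -> : toC (moment G u j) = map_mx toC (u^T *m G ^+ j *m u) 0 0 by rewrite mxE.
rewrite !map_mxM -map_trmx Gc_powers !mulmxA -(mulmxA _ P) mxE.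
apply: eq_bigr => i _; rewrite mul_mx_diag [X in X * _]mxE [X in _ * X * _]mxE.
set z := P *m map_mx toC u.
have -> : ((map_mx toC u)^T *m P^t*) 0 i = (z i 0)^*.
  rewrite !mxE rmorph_sum; apply: eq_bigr => k _.
  by rewrite !mxE rmorphM /= conj_toC mulrC.
rewrite mulrC mulrA -normCK rmorphM rmorphXn /= D_real.
by rewrite /toC /= add_Re2_Im2.
Qed.

Local Close Scope sesquilinear_scope.

Lemma symmetric_moments : exists d : 'I_n -> R,
  (forall i, eigenvalue G (d i)) /\
  forall u, exists2 w : 'I_n -> R, (forall i, 0 <= w i) &
    forall j, moment G u j = \sum_i w i * d i ^+ j.
Proof.
exists (fun i => complex.Re (D 0 i)); split => [|u]; first exact: spectral_diag_eigenvalue.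
eexists; last exact: spectral_moments.
by move=> i; rewrite addr_ge0 ?sqr_ge0.
Qed.

End SymmetricSpectrum.

Section EuclideanNorm.
Variable R : realType.

Definition nsq p (v : 'cV[R]_p) : R := (v^T *m v) 0 0.

Lemma nsqE p (v : 'cV[R]_p) : nsq v = \sum_i v i 0 ^+ 2.
Proof. by rewrite /nsq mxE; apply: eq_bigr => i _; rewrite mxE expr2. Qed.

Lemma nsq_ge0 p (v : 'cV[R]_p) : 0 <= nsq v.
Proof. by rewrite nsqE sumr_ge0 // => i _; rewrite sqr_ge0. Qed.

Lemma nsq_gt0 p (v : 'cV[R]_p) : v != 0 -> 0 < nsq v.
Proof.
apply: contraNT; rewrite -leNgt nsqE => sum_le0.
have /psumr_eq0P v2_eq0 : \sum_i v i 0 ^+ 2 = 0.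
  by apply/eqP; rewrite eq_le sum_le0 sumr_ge0 // => i _; rewrite sqr_ge0.
apply/eqP/matrixP => i j; rewrite ord1 mxE; apply/eqP.
by rewrite -sqrf_eq0 v2_eq0 // => k _; rewrite sqr_ge0.
Qed.

Lemma vnormE p (v : 'cV[R]_p) : vnorm v = Num.sqrt (nsq v).
Proof. by rewrite /vnorm nsqE. Qed.

Lemma vnorm_sq p (v : 'cV[R]_p) : vnorm v ^+ 2 = nsq v.
Proof. by rewrite vnormE sqr_sqrtr // nsq_ge0. Qed.

Lemma vnorm_ge0 p (v : 'cV[R]_p) : 0 <= vnorm v.
Proof. exact: sqrtr_ge0. Qed.

Lemma vnorm0 p : vnorm (0 : 'cV[R]_p) = 0.
Proof. by rewrite vnormE /nsq mulmx0 mxE sqrtr0. Qed.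

Lemma vnormZ p (c : R) (v : 'cV[R]_p) : vnorm (c *: v) = `|c| * vnorm v.
Proof.
have trZ : (c *: v)^T = c *: v^T by apply/matrixP => i j; rewrite !mxE.
rewrite !vnormE /nsq trZ -scalemxAl -scalemxAr !mxE mulrA -expr2.
by rewrite sqrtrM ?sqr_ge0 // sqrtr_sqr.
Qed.

Lemma vnormN p (v : 'cV[R]_p) : vnorm (- v) = vnorm v.
Proof. by rewrite -scaleN1r vnormZ normrN1 mul1r. Qed.

Lemma nsqB p (c : R) (u v : 'cV[R]_p) :
  nsq (u - c *: v) = nsq u - 2 * c * (u^T *m v) 0 0 + c ^+ 2 * nsq v.
Proof.
have uv_sym : v^T *m u = u^T *m v.
  by apply/matrixP => i j; rewrite !ord1 !mxE; apply: eq_bigr => k _; rewrite !mxE mulrC.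
have trB : (u - c *: v)^T = u^T - c *: v^T by apply/matrixP => i j; rewrite !mxE.
rewrite /nsq trB mulmxBl !mulmxBr -!scalemxAl -!scalemxAr uv_sym !mxE; ring.
Qed.

Lemma moment0 p (H : 'M[R]_p) v : moment H v 0 = nsq v.
Proof. by rewrite /moment expr0 mulmx1. Qed.

Lemma moment1 p (H : 'M[R]_p) v : moment H v 1 = bilin v H v.
Proof. by rewrite /moment expr1. Qed.

Lemma moment2 p (H : 'M[R]_p) v : moment H v 2 = bilin v (H *m H) v.
Proof. by rewrite /moment expr2. Qed.

Lemma bilin_sq p (H : 'M[R]_p) v : H^T = H -> bilin v (H *m H) v = nsq (H *m v).
Proof. by move=> Hsym; rewrite /bilin /nsq trmx_mul Hsym !mulmxA. Qed.

End EuclideanNorm.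

(* If the weighted power sums of orders 0, 1, 2 of the points d_i are those of
   a single point e carrying positive mass, then e is one of the d_i: the
   weighted variance sum_i w_i (d_i - e)^2 vanishes. *)
Lemma weights_concentrate (R : realType) (I : finType) (w d : I -> R) (e c : R) :
  0 < c -> (forall i, 0 <= w i) ->
  (forall j, (j <= 2)%N -> \sum_i w i * d i ^+ j = e ^+ j * c) ->
  exists i, d i = e.
Proof.
move=> c_gt0 w_ge0 pow_sums.
have var0 : \sum_i w i * (d i - e) ^+ 2 = 0.
  have -> : \sum_i w i * (d i - e) ^+ 2 = \sum_i w i * d i ^+ 2
      - 2 * e * \sum_i w i * d i ^+ 1 + e ^+ 2 * \sum_i w i * d i ^+ 0.
    by rewrite !mulr_sumr -sumrB -big_split /=; apply: eq_bigr => i _; ring.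
  by rewrite !pow_sums //; ring.
have term0 := psumr_eq0P (fun i _ => mulr_ge0 (w_ge0 i) (sqr_ge0 (d i - e))) var0.
case: (pselect (exists i, w i != 0)) => [[i wi_neq0]|all_w0].
  exists i; move/eqP: (term0 i isT).
  by rewrite mulf_eq0 (negbTE wi_neq0) sqrf_eq0 subr_eq0 => /eqP.
have : \sum_i w i * d i ^+ 0 = 0.
  apply: big1 => i _; case: (eqVneq (w i) 0) => [->|wi_neq0]; first by rewrite mul0r.
  by case: all_w0; exists i.
by rewrite pow_sums // expr0 mul1r => c0; rewrite c0 ltxx in c_gt0.
Qed.

Section PsdSpectrum.
Variables (R : realType) (p : nat) (H : 'M[R]_p).
Hypotheses (Hsym : H^T = H) (Hpsd : forall v, 0 <= bilin v H v).

Lemma eigenvector_col e : eigenvalue H e -> exists2 x : 'cV[R]_p, x != 0 & H *m x = e *: x.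
Proof.
move=> /eigenvalueP [v vH v_neq0]; exists v^T; first by rewrite trmx_eq0.
have trZ : (e *: v)^T = e *: v^T by apply/matrixP => i j; rewrite !mxE.
by rewrite -{1}Hsym -trmx_mul vH trZ.
Qed.

Lemma moment_eigenvector e x j : H *m x = e *: x -> moment H x j = e ^+ j * nsq x.
Proof.
move=> Hx; have Hjx : H ^+ j *m x = e ^+ j *: x.
  elim: j => [|j IH]; first by rewrite !expr0 mul1mx scale1r.
  by rewrite exprSr -mulmxE -mulmxA Hx -scalemxAr IH scalerA -exprS.
by rewrite /moment -mulmxA Hjx -scalemxAr mxE.
Qed.

Lemma eigenvalue_ge0 e : eigenvalue H e -> 0 <= e.
Proof.
move=> /eigenvector_col [x x_neq0 Hx].
have := Hpsd x; rewrite -moment1 (moment_eigenvector 1 Hx) expr1.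
by rewrite pmulr_lge0 // nsq_gt0.
Qed.

Lemma psd_spectrum : exists d : 'I_p -> R,
  [/\ forall i, eigenvalue H (d i),
      forall e, eigenvalue H e -> exists i, d i = e &
      forall u, exists2 w : 'I_p -> R, (forall i, 0 <= w i) &
        forall j, moment H u j = \sum_i w i * d i ^+ j].
Proof.
have [d [d_eig d_moments]] := symmetric_moments Hsym.
exists d; split => // e /eigenvector_col [x x_neq0 Hx].
have [w w_ge0 x_moments] := d_moments x.
apply: (weights_concentrate (nsq_gt0 x_neq0) w_ge0) => j _.
by rewrite -x_moments (moment_eigenvector j Hx).
Qed.

Lemma eigenvalues_bounded : has_ubound [set a : R | eigenvalue H a].
Proof.
have [d [_ eig_d _]] := psd_spectrum.
exists (\sum_i `|d i|) => e /eig_d [i <-].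
rewrite (bigD1 i) //=; apply: le_trans (ler_norm _) _.
by rewrite lerDl sumr_ge0.
Qed.

Lemma eigenvalue_le_max e : eigenvalue H e -> e <= lambda_max H.
Proof. by move=> He; apply: ub_le_sup eigenvalues_bounded _ He. Qed.

Lemma min_pos_le_eigenvalue e : eigenvalue H e -> 0 < e -> lambda_min_pos H <= e.
Proof. by move=> He e_gt0; apply: ge_inf; [exists 0 => a [_ /ltW] | split]. Qed.

(* Unless H kills v, H has a positive eigenvalue, seen by the moment |Hv|^2 > 0. *)
Lemma positive_eigenvalue (v : 'cV[R]_p) : H *m v != 0 -> exists2 e, eigenvalue H e & 0 < e.
Proof.
move=> Hv_neq0; have [d [d_eig _ d_moments]] := psd_spectrum.
case: (pselect (exists i, 0 < d i)) => [[i di_gt0]|no_pos]; first by exists (d i).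
have [w _ v_moments] := d_moments v.
suff : moment H v 2 = 0 by rewrite moment2 bilin_sq // => /eqP; rewrite gt_eqF ?nsq_gt0.
rewrite v_moments big1 // => i _.
suff -> : d i = 0 by rewrite expr0n mulr0.
apply/eqP; rewrite eq_le eigenvalue_ge0 // andbT leNgt.
by apply/negP => di_gt0; apply: no_pos; exists i.
Qed.

(* The smallest positive eigenvalue is attained, hence positive. *)
Lemma lambda_min_pos_gt0 (v : 'cV[R]_p) : H *m v != 0 -> 0 < lambda_min_pos H.
Proof.
move=> /positive_eigenvalue [e0 He0 e0_gt0].
have [d [_ eig_d _]] := psd_spectrum; have [i0 di0] := eig_d _ He0.
pose m0 := \big[Order.min/d i0]_(i | 0 < d i) d i.
have m0_gt0 : 0 < m0.
  by apply: (big_ind (fun x => 0 < x)) => [|x y x0 y0|]; rewrite ?lt_min ?di0 ?x0 ?y0.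
apply: lt_le_trans m0_gt0 _; apply: lb_le_inf; first by exists e0.
by move=> e [/eig_d [i <-] di_gt0]; rewrite /m0 (bigD1 i) //= ge_min lexx.
Qed.

Lemma lambda_min_pos_le_max (v : 'cV[R]_p) : H *m v != 0 -> lambda_min_pos H <= lambda_max H.
Proof.
move=> /positive_eigenvalue [e He e_gt0].
by apply: le_trans (min_pos_le_eigenvalue He e_gt0) (eigenvalue_le_max He).
Qed.

Lemma bilin_sq_le (U : R) (v : 'cV[R]_p) : (forall e, eigenvalue H e -> e <= U) ->
  bilin v (H *m H) v <= U * bilin v H v.
Proof.
move=> U_ub; have [d [d_eig _ d_moments]] := psd_spectrum.
have [w w_ge0 v_moments] := d_moments v.
rewrite -moment2 -moment1 !v_moments mulr_sumr; apply: ler_sum => i _.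
have di_le := U_ub _ (d_eig i); have di_ge0 := eigenvalue_ge0 (d_eig i).
have : 0 <= w i * d i * (U - d i) by rewrite !mulr_ge0 ?subr_ge0.
have := w_ge0 i; rewrite expr1 expr2; nra.
Qed.

End PsdSpectrum.

(* Kantorovich-type bound behind the rate of steepest descent: for a
   nonnegative weight distribution on points d_i in [mu, L], with power sums
   a_j = sum_i w_i d_i^j, the value a_0 - a_1^2 / a_2 (the residual of the best
   step along the gradient) is at most ((L - mu)/(L + mu))^2 a_0.  It is
   compared with the fixed step 2/(L + mu). *)
Lemma kantorovich_step (R : realType) (I : finType) (w d : I -> R) (mu L : R) :
  0 < mu -> mu <= L -> (forall i, 0 <= w i) ->
  (forall i, w i = 0 \/ mu <= d i <= L) ->
  0 < \sum_i w i * d i ^+ 2 ->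
  \sum_i w i * d i ^+ 0 - (\sum_i w i * d i ^+ 1) ^+ 2 / \sum_i w i * d i ^+ 2
   <= ((L - mu) / (L + mu)) ^+ 2 * \sum_i w i * d i ^+ 0.
Proof.
move=> mu_gt0 mu_le_L w_ge0 w_supp a2_gt0.
set a0 := \sum_i w i * d i ^+ 0; set a1 := \sum_i w i * d i ^+ 1.
set a2 := \sum_i w i * d i ^+ 2; set s := 2 / (L + mu).
have Lmu_gt0 : 0 < L + mu by lra.
have best_step : a0 - a1 ^+ 2 / a2 <= a0 - 2 * s * a1 + s ^+ 2 * a2.
  have -> : a0 - 2 * s * a1 + s ^+ 2 * a2 = a0 - a1 ^+ 2 / a2 + (s * a2 - a1) ^+ 2 / a2.
    by field; rewrite gt_eqF.
  by rewrite lerDl divr_ge0 ?sqr_ge0 ?ltW.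
have fixed_step : a0 - 2 * s * a1 + s ^+ 2 * a2 = \sum_i w i * (1 - s * d i) ^+ 2.
  by rewrite !mulr_sumr -sumrB -big_split /=; apply: eq_bigr => i _; ring.
apply: le_trans best_step _; rewrite fixed_step /a0 mulr_sumr; apply: ler_sum => i _.
case: (w_supp i) => [->|/andP [mu_le L_ge]]; first by rewrite !mul0r mulr0.
rewrite expr0 mulr1 mulrC ler_wpM2r //.
have -> : (1 - s * d i) ^+ 2 =
    ((L - mu) / (L + mu)) ^+ 2 - 4 * (d i - mu) * (L - d i) / (L + mu) ^+ 2.
  by rewrite /s; field; rewrite gt_eqF.
by rewrite gerBl divr_ge0 ?sqr_ge0 // !mulr_ge0 ?subr_ge0.
Qed.

Definition descent_rate (R : realType) p (H : 'M[R]_p) : R :=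
  (kappa_plus H - 1) / (kappa_plus H + 1).

Section OneStep.
Variables (R : realType) (p : nat) (H : 'M[R]_p).
Hypotheses (Hsym : H^T = H) (Hpsd : forall v, 0 <= bilin v H v).

Lemma F1_nsq (r : 'cV[R]_p) : H *m r != 0 ->
  nsq (F1 H r) = nsq r - bilin r H r ^+ 2 / bilin r (H *m H) r.
Proof.
move=> Hr_neq0; have a2_gt0 := nsq_gt0 Hr_neq0.
rewrite /F1 nsqB /alpha11 bilin_sq // mulmxA -/(bilin r H r).
by field; rewrite gt_eqF.
Qed.

Lemma descent_rateE (r : 'cV[R]_p) : H *m r != 0 -> descent_rate H =
  (lambda_max H - lambda_min_pos H) / (lambda_max H + lambda_min_pos H).
Proof.
move=> Hr_neq0; have mu_gt0 := lambda_min_pos_gt0 Hsym Hpsd Hr_neq0.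
have L_ge := lambda_min_pos_le_max Hsym Hpsd Hr_neq0.
rewrite /descent_rate /kappa_plus.
move: (lambda_max H) (lambda_min_pos H) mu_gt0 L_ge => L mu mu_gt0 L_ge.
have Lmu_neq0 : L + mu != 0 by rewrite gt_eqF //; lra.
have -> : L / mu + 1 = (L + mu) / mu by field; rewrite gt_eqF.
by field; rewrite Lmu_neq0 gt_eqF.
Qed.

Lemma descent_rate_ge0 (r : 'cV[R]_p) : H *m r != 0 -> 0 <= descent_rate H.
Proof.
move=> Hr_neq0; have mu_gt0 := lambda_min_pos_gt0 Hsym Hpsd Hr_neq0.
have L_ge := lambda_min_pos_le_max Hsym Hpsd Hr_neq0.
by rewrite (descent_rateE Hr_neq0) divr_ge0 //; lra.
Qed.

Lemma cH_eq (r : 'cV[R]_p) : H *m r != 0 ->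
  cH H = lambda_min_pos H / lambda_max H ^+ 2.
Proof.
move=> Hr_neq0; have mu_gt0 := lambda_min_pos_gt0 Hsym Hpsd Hr_neq0.
have L_gt0 := lt_le_trans mu_gt0 (lambda_min_pos_le_max Hsym Hpsd Hr_neq0).
by rewrite /cH /kappa_plus; field; rewrite !gt_eqF.
Qed.

Lemma F1_energy_decrease (v : 'cV[R]_p) : H *m v != 0 ->
  nsq (F1 H v) <= nsq v - cH H * bilin v H v.
Proof.
move=> Hv_neq0; rewrite F1_nsq // lerD2l lerN2 (cH_eq Hv_neq0).
have mu_gt0 := lambda_min_pos_gt0 Hsym Hpsd Hv_neq0.
have mu_le_L := lambda_min_pos_le_max Hsym Hpsd Hv_neq0.
have a2_le := bilin_sq_le Hsym Hpsd v (eigenvalue_le_max Hsym); have a1_ge0 := Hpsd v.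
have a2_gt0 : 0 < bilin v (H *m H) v by rewrite bilin_sq // nsq_gt0.
move: (lambda_max H) (lambda_min_pos H) (bilin v H v) (bilin v (H *m H) v)
  mu_gt0 mu_le_L a2_le a1_ge0 a2_gt0 => L mu a1 a2 mu_gt0 mu_le_L a2_le a1_ge0 a2_gt0.
have L_gt0 : 0 < L by lra.
rewrite ler_pdivlMr //; set c := mu / L ^+ 2.
have c_ge0 : 0 <= c by rewrite divr_ge0 ?sqr_ge0 ?ltW.
have cL_le1 : c * L <= 1.
  have -> : c * L = mu / L by rewrite /c; field; rewrite gt_eqF.
  by rewrite ler_pdivrMr ?mul1r.
have : c * a1 * a2 <= c * a1 * (L * a1) by apply: ler_wpM2l => //; apply: mulr_ge0.
have : 0 <= (1 - c * L) * a1 ^+ 2 by rewrite mulr_ge0 ?subr_ge0 ?sqr_ge0.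
nra.
Qed.

(* Contraction of one step on vectors whose spectral weights avoid the kernel
   of H: if the moments of v are those of a weight distribution shifted by
   t >= 1 powers of nonnegative points d_i, each positive d_i being an
   eigenvalue of H, then |F1 v| <= descent_rate H |v|. *)
Lemma F1_contraction (I : finType) (w d : I -> R) (t : nat) (v : 'cV[R]_p) :
  (0 < t)%N -> (forall i, 0 <= w i) -> (forall i, 0 <= d i) ->
  (forall i, 0 < d i -> eigenvalue H (d i)) ->
  (forall j, moment H v j = \sum_i w i * d i ^+ (j + t)) ->
  H *m v != 0 -> vnorm (F1 H v) <= descent_rate H * vnorm v.
Proof.
move=> t_gt0 w_ge0 d_ge0 d_eig v_moments Hv_neq0.
have mu_gt0 := lambda_min_pos_gt0 Hsym Hpsd Hv_neq0.
have mu_le_L := lambda_min_pos_le_max Hsym Hpsd Hv_neq0.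
have shifted j : moment H v j = \sum_i (w i * d i ^+ t) * d i ^+ j.
  by rewrite v_moments; apply: eq_bigr => i _; rewrite -mulrA -exprD addnC.
have supp i : w i * d i ^+ t = 0 \/ lambda_min_pos H <= d i <= lambda_max H.
  have [->|di_neq0] := eqVneq (d i) 0; first by left; rewrite expr0n eqn0Ngt t_gt0 mulr0.
  have di_gt0 : 0 < d i by rewrite lt_def di_neq0 d_ge0.
  right; rewrite min_pos_le_eigenvalue ?eigenvalue_le_max //; exact: d_eig.
have a2_gt0 : 0 < \sum_i (w i * d i ^+ t) * d i ^+ 2.
  by rewrite -shifted moment2 bilin_sq // nsq_gt0.
have := kantorovich_step mu_gt0 mu_le_L (fun i => mulr_ge0 (w_ge0 i) (exprn_ge0 t (d_ge0 i)))
  supp a2_gt0.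
rewrite -!shifted moment0 moment1 moment2 -F1_nsq // -(descent_rateE Hv_neq0) => nsq_le.
rewrite !vnormE -(ger0_norm (descent_rate_ge0 Hv_neq0)) -sqrtr_sqr -sqrtrM ?sqr_ge0 //.
by rewrite ler_sqrt // mulr_ge0 ?sqr_ge0 ?nsq_ge0.
Qed.

End OneStep.

(* Turning the geometric rate q^k with q = (kappa - 1)/(kappa + 1) into an
   iteration count, through q <= exp(-1/kappa). *)
Lemma geometric_iteration_count (R : realType) (kap rho N eps : R) (k : nat) :
  1 <= kap -> 0 <= rho -> 0 < eps ->
  N <= ((kap - 1) / (kap + 1)) ^+ k * rho ->
  kap * ln (rho / eps) <= k%:R -> N <= eps.
Proof.
move=> kap_ge1 rho_ge0 eps_gt0 N_le k_ge; set q := (kap - 1) / (kap + 1) in N_le.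
have kap_gt0 : 0 < kap by lra.
have q_ge0 : 0 <= q by rewrite divr_ge0 //; lra.
have [rho_le|eps_lt] := lerP rho eps.
  apply: le_trans N_le (le_trans _ rho_le); rewrite ler_piMl // exprn_ile1 //.
  by rewrite ler_pdivrMr; lra.
have q_le_exp : q <= expR (- kap^-1).
  apply: le_trans (expR_ge1Dx _); rewrite ler_pdivrMr; last lra.
  have : kap^-1 * kap = 1 by rewrite mulVf // gt_eqF.
  have : kap^-1 <= 1 by rewrite invr_le1 // unitfE gt_eqF.
  have : 0 < kap^-1 by rewrite invr_gt0.
  nra.
have exp_le : expR (k%:R * - kap^-1) <= eps / rho.
  have -> : eps / rho = expR (- ln (rho / eps)).
    by rewrite expRN lnK ?posrE ?divr_gt0 ?invf_div //; lra.
  by rewrite ler_expR mulrN lerN2 ler_pdivlMr // mulrC.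
have qk_le : q ^+ k <= eps / rho.
  apply: le_trans exp_le; rewrite expRM_natl.
  by apply: lerXn2r; rewrite // nnegrE expR_ge0.
have rho_gt0 : 0 < rho by lra.
by apply: le_trans N_le _; rewrite -ler_pdivlMr.
Qed.

Lemma energy_iteration_count (R : realType) k (a : 'I_k -> R) (c n0 nk eps : R) :
  0 < c -> 0 < eps -> 0 <= nk ->
  nk <= n0 - c * \sum_(j < k) a j -> (forall j, eps < a j) ->
  k%:R <= c^-1 * n0 / eps.
Proof.
move=> c_gt0 eps_gt0 nk_ge0 nk_le a_gt.
have sum_ge : k%:R * eps <= \sum_(j < k) a j.
  rewrite -[k in k%:R](card_ord k) mulr_natl -sumr_const.
  by apply: ler_sum => j _; rewrite ltW.
have sum_le : \sum_(j < k) a j <= c^-1 * n0.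
  by rewrite -(ler_pM2l c_gt0) mulrA mulfV ?gt_eqF // mul1r; lra.
by rewrite ler_pdivlMr //; apply: le_trans sum_le.
Qed.

Section SteepestDescent.
Variables (R : realType) (m n : nat) (A : 'M[R]_(m, n)) (H : 'M[R]_m).
Variable dir : 'cV[R]_m -> 'cV[R]_n.
Hypotheses (Hsym : H^T = H) (Hpsd : forall v, 0 <= bilin v H v).
Hypothesis A_dir : forall v, A *m dir v = H *m v.
Hypothesis range_contraction : forall s, H *m (A *m s) != 0 ->
  vnorm (F1 H (A *m s)) <= descent_rate H * vnorm (A *m s).
Variables (b : 'cV[R]_m) (x : nat -> 'cV[R]_n) (r : nat -> 'cV[R]_m) (k : nat).
Hypothesis r0 : r 0%N = b - A *m x 0%N.
Hypothesis rS : forall j, (j < k)%N -> r j.+1 = F1 H (r j).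
Hypothesis xS : forall j, (j < k)%N -> x j.+1 = x j + alpha11 H (r j) *: dir (r j).
Hypothesis k_gt0 : (1 <= k)%N.
Hypothesis Hr : forall j, (j < k)%N -> H *m r j != 0.

Let Hr0 : H *m r 0%N != 0. Proof. exact: Hr. Qed.

Lemma residual_identity j : (j <= k)%N -> r j = b - A *m x j.
Proof.
elim: j => [|j IH] jk; first exact: r0.
have rj := IH (ltnW jk).
by rewrite rS // xS // mulmxDr -scalemxAr A_dir /F1 {1}rj opprD addrA.
Qed.

Lemma residual_in_range : (exists z, A *m z = b) ->
  forall j, (j <= k)%N -> exists s, r j = A *m s.
Proof.
move=> [z Az]; elim=> [|j IH] jk.
  by exists (z - x 0%N); rewrite r0 -Az mulmxBr.
have [s rj] := IH (ltnW jk); exists (s - alpha11 H (A *m s) *: dir (A *m s)).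
by rewrite rS // rj /F1 mulmxBr -scalemxAr A_dir.
Qed.

Lemma residual_decay : (exists z, A *m z = b) ->
  vnorm (r k) <= descent_rate H ^+ k * vnorm (r 0%N).
Proof.
move=> solvable; suff : forall j, (j <= k)%N ->
    vnorm (r j) <= descent_rate H ^+ j * vnorm (r 0%N) by apply.
elim=> [|j IH] jk; first by rewrite expr0 mul1r.
have [s rj] := residual_in_range solvable (ltnW jk).
have step : vnorm (r j.+1) <= descent_rate H * vnorm (r j).
  by rewrite rS // rj; apply: range_contraction; rewrite -rj Hr.
apply: le_trans step _; rewrite exprS -mulrA.
apply: ler_wpM2l; [exact: (descent_rate_ge0 Hsym Hpsd Hr0) | exact: IH (ltnW jk)].
Qed.

Lemma residual_energy :
  vnorm (r k) ^+ 2 <= vnorm (r 0%N) ^+ 2 - cH H * \sum_(j < k) bilin (r j) H (r j).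
Proof.
rewrite !vnorm_sq; suff : forall j, (j <= k)%N ->
    nsq (r j) <= nsq (r 0%N) - cH H * \sum_(i < j) bilin (r i) H (r i) by apply.
elim=> [|j IH] jk; first by rewrite big_ord0 mulr0 subr0.
rewrite rS // big_ord_recr /=; apply: le_trans (F1_energy_decrease Hsym Hpsd (Hr jk)) _.
by have := IH (ltnW jk); lra.
Qed.

Lemma kappa_plus_ge1 : 1 <= kappa_plus H.
Proof.
have mu_gt0 := lambda_min_pos_gt0 Hsym Hpsd Hr0.
by rewrite /kappa_plus ler_pdivlMr // mul1r (lambda_min_pos_le_max Hsym Hpsd Hr0).
Qed.

Lemma steepest_descent_bounds :
  [/\ r k = b - A *m x k,
      (exists z, A *m z = b) -> vnorm (r k) <= descent_rate H ^+ k * vnorm (r 0%N),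
      (forall eps : R, (exists z, A *m z = b) -> 0 < eps < 1 ->
         kappa_plus H * ln (vnorm (r 0%N) / eps) <= k%:R -> vnorm (r k) <= eps),
      vnorm (r k) ^+ 2 <= vnorm (r 0%N) ^+ 2 - cH H * \sum_(j < k) bilin (r j) H (r j) &
      (forall eps : R, 0 < eps < 1 ->
         (forall j, (j < k)%N -> eps < bilin (r j) H (r j)) ->
         k%:R <= kappa_plus H * lambda_max H * vnorm (r 0%N) ^+ 2 / eps)] /\
  (forall eps : R, vnorm (r k) <= eps -> vnorm (A *m x k - b) <= eps).
Proof.
have rk := residual_identity (leqnn k).
split; last by move=> eps; rewrite rk -vnormN opprB.
split; [exact: rk | exact: residual_decay | | exact: residual_energy |].
  move=> eps solvable /andP [eps_gt0 _].
  exact: geometric_iteration_count kappa_plus_ge1 (vnorm_ge0 _) eps_gt0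
    (residual_decay solvable).
move=> eps /andP [eps_gt0 _] bilin_gt.
have mu_gt0 := lambda_min_pos_gt0 Hsym Hpsd Hr0.
have L_gt0 := lt_le_trans mu_gt0 (lambda_min_pos_le_max Hsym Hpsd Hr0).
have cH_gt0 : 0 < cH H by rewrite (cH_eq Hsym Hpsd Hr0) divr_gt0 ?exprn_gt0.
have -> : kappa_plus H * lambda_max H = (cH H)^-1 by rewrite /cH div1r invrK.
apply: (energy_iteration_count cH_gt0 eps_gt0 (sqr_ge0 _) residual_energy).
by move=> j; apply: bilin_gt.
Qed.

End SteepestDescent.

Section Gram.
Variables (R : realType) (p q : nat) (B : 'M[R]_(p, q)).

Lemma gram_sym : (B *m B^T)^T = B *m B^T.
Proof. by rewrite trmx_mul trmxK. Qed.

Lemma gram_bilin u : bilin u (B *m B^T) u = nsq (B^T *m u).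
Proof. by rewrite /bilin /nsq trmx_mul trmxK !mulmxA. Qed.

Lemma gram_psd u : 0 <= bilin u (B *m B^T) u.
Proof. by rewrite gram_bilin nsq_ge0. Qed.

Lemma gram_push_through j : B^T *m (B *m B^T) ^+ j = (B^T *m B) ^+ j *m B^T.
Proof.
elim: j => [|j IH]; first by rewrite !expr0 mulmx1 mul1mx.
by rewrite !exprSr -!mulmxE !mulmxA IH -!mulmxA.
Qed.

Lemma moment_gram s j : moment (B *m B^T) (B *m s) j = moment (B^T *m B) s j.+1.
Proof.
rewrite /moment trmx_mul exprSr -mulmxE !mulmxA -(mulmxA s^T) gram_push_through.
by rewrite !mulmxA.
Qed.

Lemma gram_eigenvalue e : eigenvalue (B^T *m B) e -> e != 0 -> eigenvalue (B *m B^T) e.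
Proof.
move=> /eigenvalueP [v vG v_neq0] e_neq0; apply/eigenvalueP; exists (v *m B^T).
  by rewrite mulmxA -(mulmxA v) vG -scalemxAl.
apply: contraNneq v_neq0 => vBt0; move: vG; rewrite mulmxA vBt0 mul0mx => /esym/eqP.
by rewrite scaler_eq0 (negbTE e_neq0).
Qed.

End Gram.

Lemma gram_range_contraction (R : realType) m n (A : 'M[R]_(m, n)) (s : 'cV[R]_n) :
  (A *m A^T) *m (A *m s) != 0 ->
  vnorm (F1 (A *m A^T) (A *m s)) <= descent_rate (A *m A^T) * vnorm (A *m s).
Proof.
have AtA_sym : (A^T *m A)^T = A^T *m A by have := gram_sym A^T; rewrite trmxK.
have AtA_psd u : 0 <= bilin u (A^T *m A) u by have := gram_psd A^T u; rewrite trmxK.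
have [d [d_eig _ d_moments]] := psd_spectrum AtA_sym.
have [w w_ge0 s_moments] := d_moments s.
apply: (F1_contraction (gram_sym A) (gram_psd A) (t := 1) (w := w) (d := d)) => //.
- move=> l; exact: (eigenvalue_ge0 AtA_sym AtA_psd (d_eig l)).
- by move=> l dl_gt0; exact: (gram_eigenvalue (d_eig l) (lt0r_neq0 dl_gt0)).
- by move=> j; rewrite moment_gram s_moments addn1.
Qed.

(* Case H = A symmetric psd: moments of A s are those of s shifted by two. *)
Lemma psd_range_contraction (R : realType) n (A : 'M[R]_n) (s : 'cV[R]_n) :
  sym_psd A -> A *m (A *m s) != 0 ->
  vnorm (F1 A (A *m s)) <= descent_rate A * vnorm (A *m s).
Proof.
move=> [Asym Apsd]; have [d [d_eig _ d_moments]] := psd_spectrum Asym.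
have [w w_ge0 s_moments] := d_moments s.
apply: (F1_contraction Asym Apsd (t := 2) (w := w) (d := d)) => //.
  by move=> i; exact: (eigenvalue_ge0 Asym Apsd (d_eig i)).
move=> j; have A_pow : A *m A ^+ j *m A = A ^+ (j + 2).
  by rewrite addn2 exprS exprSr -!mulmxE mulmxA.
by rewrite -s_moments /moment trmx_mul Asym -A_pow !mulmxA.
Qed.

Section OperatorNorm.
Variables (R : realType) (p q : nat) (M : 'M[R]_(p, q)).

(* The set defining the operator norm is bounded: on the unit ball every
   entry of x is at most 1, so |Mx| is bounded by the absolute row sums of M. *)
Lemma opnorm_bounded :
  has_ubound [set vnorm (M *m x) | x in [set x : 'cV[R]_q | vnorm x <= 1]]%classic.
Proof.
exists (Num.sqrt (\sum_i (\sum_j `|M i j|) ^+ 2)) => _ [x /= x_le1 <-].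
rewrite vnormE ler_wsqrtr // nsqE; apply: ler_sum => i _.
have nsq_le1 : nsq x <= 1.
  by rewrite -vnorm_sq -(expr1n _ 2) lerXn2r // ?nnegrE ?vnorm_ge0.
have entry_le1 j : `|x j 0| <= 1.
  rewrite -(expr_le1 (n := 2)) ?normr_ge0 // real_normK ?num_real //.
  apply: le_trans nsq_le1; rewrite nsqE (bigD1 j) //= lerDl sumr_ge0 // => k _.
  by rewrite sqr_ge0.
rewrite -real_normK ?num_real //; apply: lerXn2r; rewrite ?nnegrE ?normr_ge0 ?sumr_ge0 //.
rewrite mxE; apply: le_trans (ler_norm_sum _ _ _) _; apply: ler_sum => j _.
by rewrite normrM ler_piMr.
Qed.

Lemma opnorm_ub x : vnorm x <= 1 -> vnorm (M *m x) <= opnorm M.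
Proof. by move=> x_le1; apply: (ub_le_sup opnorm_bounded); exists x. Qed.

Lemma opnorm_ge0 : 0 <= opnorm M.
Proof. by have := @opnorm_ub 0; rewrite mulmx0 !vnorm0; apply. Qed.

End OperatorNorm.

(* An eigenvalue of a symmetric matrix is at most its operator norm,
   as witnessed by a unit eigenvector. *)
Lemma eigenvalue_le_opnorm (R : realType) n (A : 'M[R]_n) e :
  A^T = A -> eigenvalue A e -> e <= opnorm A.
Proof.
move=> Asym /(eigenvector_col Asym) [x x_neq0 Ax].
have x_gt0 : 0 < vnorm x by rewrite vnormE sqrtr_gt0 nsq_gt0.
pose y := (vnorm x)^-1 *: x.
have y_unit : vnorm y = 1 by rewrite vnormZ ger0_norm ?invr_ge0 ?ltW // mulVf ?gt_eqF.
have y_le1 : vnorm y <= 1 by rewrite y_unit.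
have := opnorm_ub A y_le1; rewrite -scalemxAr Ax scalerA mulrC -scalerA.
by rewrite vnormZ y_unit mulr1; apply: le_trans (ler_norm e).
Qed.

(* Second half of (VI) for H = A A^T: A^T A x - A^T b = -A^T r and |A^T r|^2 = r^T H r. *)
Lemma normal_residual_gram (R : realType) m n (A : 'M[R]_(m, n)) x b (eps : R) :
  bilin (b - A *m x) (A *m A^T) (b - A *m x) <= eps ->
  vnorm (A^T *m A *m x - A^T *m b) <= Num.sqrt eps.
Proof.
rewrite gram_bilin => le_eps.
have -> : A^T *m A *m x - A^T *m b = - (A^T *m (b - A *m x)).
  by rewrite mulmxBr opprB mulmxA.
by rewrite vnormN vnormE ler_wsqrtr.
Qed.

(* Second half of (VI) for H = A psd: |A r|^2 = r^T A^2 r <= |A| r^T A r. *)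
Lemma normal_residual_psd (R : realType) n (A : 'M[R]_n) x b (eps : R) : sym_psd A ->
  bilin (b - A *m x) A (b - A *m x) <= eps ->
  vnorm (A^T *m A *m x - A^T *m b) <= Num.sqrt eps * Num.sqrt (opnorm A).
Proof.
move=> [Asym Apsd]; set r := b - A *m x => le_eps.
have eps_ge0 : 0 <= eps := le_trans (Apsd r) le_eps.
have -> : A^T *m A *m x - A^T *m b = - (A *m r) by rewrite Asym /r mulmxBr opprB mulmxA.
rewrite vnormN vnormE -bilin_sq // -sqrtrM // ler_wsqrtr //.
apply: le_trans (bilin_sq_le Asym Apsd r (fun e => eigenvalue_le_opnorm Asym)) _.
by rewrite mulrC; apply: ler_wpM2r => //; exact: opnorm_ge0.
Qed.

Theorem mainTheorem5 (R : realType) :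
  (* Case H = A A^T *)
  (forall (m n : nat) (A : 'M[R]_(m, n)) (b w0 : 'cV[R]_m)
          (x : nat -> 'cV[R]_n) (r : nat -> 'cV[R]_m) (k : nat),
     let H := A *m A^T in
     x 0%N = A^T *m w0 ->
     r 0%N = b - A *m x 0%N ->
     (forall j, (j < k)%N -> r j.+1 = F1 H (r j)) ->
     (forall j, (j < k)%N -> x j.+1 = x j + alpha11 H (r j) *: (A^T *m r j)) ->
     (1 <= k)%N ->
     (forall j, (j < k)%N -> H *m r j != 0) ->
     [/\ (* (I) *) r k = b - A *m x k,
         (* (II) *) (exists z, A *m z = b) ->
            vnorm (r k) <= ((kappa_plus H - 1) / (kappa_plus H + 1)) ^+ k * vnorm (r 0%N),
         (* (III) *) (forall eps : R, (exists z, A *m z = b) -> 0 < eps < 1 ->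
            kappa_plus H * ln (vnorm (r 0%N) / eps) <= k%:R -> vnorm (r k) <= eps),
         (* (IV) *) vnorm (r k) ^+ 2 <=
            vnorm (r 0%N) ^+ 2 - cH H * \sum_(j < k) bilin (r j) H (r j) &
         (* (V) *) (forall eps : R, 0 < eps < 1 ->
            (forall j, (j < k)%N -> eps < bilin (r j) H (r j)) ->
            k%:R <= kappa_plus H * lambda_max H * vnorm (r 0%N) ^+ 2 / eps)] /\
        ((* (VI) *) forall eps : R,
            (vnorm (r k) <= eps -> vnorm (A *m x k - b) <= eps) /\
            (bilin (r k) H (r k) <= eps ->
               vnorm (A^T *m A *m x k - A^T *m b) <= Num.sqrt eps))) /\
  (* Case H = A, A square symmetric positive semidefinite *)
  (forall (n : nat) (A : 'M[R]_n) (b w0 : 'cV[R]_n)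
          (x : nat -> 'cV[R]_n) (r : nat -> 'cV[R]_n) (k : nat),
     sym_psd A ->
     let H := A in
     x 0%N = A^T *m w0 ->
     r 0%N = b - A *m x 0%N ->
     (forall j, (j < k)%N -> r j.+1 = F1 H (r j)) ->
     (forall j, (j < k)%N -> x j.+1 = x j + alpha11 H (r j) *: r j) ->
     (1 <= k)%N ->
     (forall j, (j < k)%N -> H *m r j != 0) ->
     [/\ (* (I) *) r k = b - A *m x k,
         (* (II) *) (exists z, A *m z = b) ->
            vnorm (r k) <= ((kappa_plus H - 1) / (kappa_plus H + 1)) ^+ k * vnorm (r 0%N),
         (* (III) *) (forall eps : R, (exists z, A *m z = b) -> 0 < eps < 1 ->
            kappa_plus H * ln (vnorm (r 0%N) / eps) <= k%:R -> vnorm (r k) <= eps),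
         (* (IV) *) vnorm (r k) ^+ 2 <=
            vnorm (r 0%N) ^+ 2 - cH H * \sum_(j < k) bilin (r j) H (r j) &
         (* (V) *) (forall eps : R, 0 < eps < 1 ->
            (forall j, (j < k)%N -> eps < bilin (r j) H (r j)) ->
            k%:R <= kappa_plus H * lambda_max H * vnorm (r 0%N) ^+ 2 / eps)] /\
        ((* (VI) *) forall eps : R,
            (vnorm (r k) <= eps -> vnorm (A *m x k - b) <= eps) /\
            (bilin (r k) H (r k) <= eps ->
               vnorm (A^T *m A *m x k - A^T *m b) <= Num.sqrt eps * Num.sqrt (opnorm A)))).
Proof.
split.
- move=> m n A b w0 x r k H _ r0 rS xS k_gt0 Hr.
  have [bounds residual_le] := steepest_descent_bounds (gram_sym A) (gram_psd A)
    (fun v => mulmxA A A^T v) (@gram_range_contraction R m n A) r0 rS xS k_gt0 Hr.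
  split => // eps; split; first exact: residual_le.
  by case: bounds => -> _ _ _ _; apply: normal_residual_gram.
- move=> n A b w0 x r k A_psd H _ r0 rS xS k_gt0 Hr.
  have [Asym Apsd] := A_psd.
  have [bounds residual_le] := steepest_descent_bounds Asym Apsd (dir := id)
    (fun v => erefl) (fun s => @psd_range_contraction R n A s A_psd) r0 rS xS k_gt0 Hr.
  split => // eps; split; first exact: residual_le.
  by case: bounds => -> _ _ _ _; apply: normal_residual_psd.
Qed.
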